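(* Let $G$ be an $n$-isobicyclic group with canonical generators $x,y$, and let $P$ be an abelian normal Sylow $p$-subgroup of $G$, so $P=\langle x_p\rangle\times\langle y_p\rangle\cong C_{p^d}\times C_{p^d}$. Then $G$ acts diagonally on $P$ with respect to the basis $x_p,y_p$: there exists $\lambda\in\mathbb Z_{p^d}^*$ such that conjugation by $x$ fixes $x_p$ and sends $y_p\mapsto y_p^\lambda$, and conjugation by $y$ sends $x_p\mapsto x_p^\lambda$ and fixes $y_p$.
   Context: $G$ is $n$-isobicyclic with canonical generators $x,y$ if $X=\langle x\rangle$, $Y=\langle y\rangle$ are cyclic of order $n$, $G=XY$, $X\cap Y=1$, and some automorphism of $G$ transposes $x,y$. For a prime $p$, $x=x_px_{p'}$ and $y=y_py_{p'}$ are the factorisations into commuting elements of $p$-power and $p'$-order; $\langle x_p\rangle\langle y_p\rangle$ is a Sylow $p$-subgroup of $G$, equal to $P$ when $P$ is normal. *)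

From mathcomp Require Import all_boot all_fingroup all_solvable.
Set Implicit Arguments. Unset Strict Implicit. Unset Printing Implicit Defensive.
Local Open Scope group_scope.

Definition isobicyclic (gT : finGroupType) (G : {group gT}) (x y : gT) (n : nat) : Prop :=
  [/\ #[x]%g = n, #[y]%g = n, (<[x]> * <[y]>)%g = G, (<[x]> :&: <[y]> = 1)%g
    & exists2 a : {perm gT}, a \in Aut G & a x = y /\ a y = x].

From mathcomp Require Import all_boot all_fingroup all_solvable.
Set Implicit Arguments. Unset Strict Implicit. Unset Printing Implicit Defensive.
Local Open Scope group_scope.

(* Write X = <x>, Y = <y>; P = <x_p> \x <y_p>.  Since the automorphism swapping x
   and y swaps the two cases, we may assume |Y : C_Y(P)| <= |X : C_X(P)|, and it
   suffices to show that z := x_p^y lies in <x_p>.  If z <> x_p, the X-class of z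
   lies inside the Y-class of x_p (because G = XY and X fixes x_p) and misses x_p,
   so |X : C_X(z)| < |Y : C_Y(x_p)| <= |X : C_X(P)|: some g in X centralises z but
   not P, and then so does its p'-part h.  Now h acts coprimely on the abelian
   p-group P, fixing <x_p>; were C_P(h) to meet the cyclic factor <y_p>, h would
   centralise Omega_1(P), hence P.  So z is in C_P(h) = <x_p>, i.e. z = x_p^lam,
   and lam is prime to p because z has the same order as x_p. *)

Section CoprimeAction.

Variable gT : finGroupType.
Implicit Types (A B C H P : {group gT}) (p : nat).

Lemma coprime_abelian_cent_Ohm1 A P :
  abelian P -> A \subset 'N(P) -> coprime #|P| #|A| ->
  'Ohm_1(P) \subset 'C(A) -> A \subset 'C(P).
Proof.
move=> abP nPA coPA cAP1; rewrite centsC; apply/commG1P.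
have sRP : [~: P, A] \subset P by rewrite commg_subl.
have: 'Ohm_1([~: P, A]) \subset 'C_[~: P, A](A).
  by rewrite subsetI Ohm_sub (subset_trans (OhmS 1 sRP)).
by rewrite coprime_abel_cent_TI // subG1 Ohm1_eq1 => /eqP.
Qed.

Lemma cyclic_pgroup_Ohm1_sub p B C :
  p.-group B -> cyclic B -> C :&: B != 1 -> 'Ohm_1(B) \subset C.
Proof.
move=> pB cycB ntCB; have ntB : B :!=: 1.
  by apply: contraNneq ntCB => ->; rewrite setIg1.
have [pr_p _ _] := pgroup_pdiv pB ntB.
have prB1 : prime #|'Ohm_1(B)| by rewrite (Ohm1_cyclic_pgroup_prime cycB pB ntB).
apply: contraR (meet_Ohm1 ntCB) => /(prime_TIg prB1).
by rewrite setIC => ->.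
Qed.

Lemma dprod_cyclic_coprime_cent p H A B P :
    p.-group P -> abelian P -> A \x B = P -> cyclic B ->
    H \subset 'N(P) -> coprime #|P| #|H| -> A \subset 'C(H) -> ~~ (H \subset 'C(P)) ->
  'C_P(H) = A.
Proof.
move=> pP abP defP cycB nPH coPH cHA ncPH.
have [_ defAB _ _] := dprodP defP.
have [sAP sBP] : A \subset P /\ B \subset P by apply/andP; rewrite -mulG_subG defAB.
have tiCB : 'C_P(H) :&: B = 1.
  apply: contraNeq ncPH => /(cyclic_pgroup_Ohm1_sub (pgroupS sBP pP) cycB) sB1C.
  apply: coprime_abelian_cent_Ohm1 => //; rewrite -(dprodW (Ohm_dprod 1 defP)).
  rewrite mulG_subG (subset_trans (Ohm_sub 1 A) cHA) /=.
  by rewrite (subset_trans sB1C) ?subsetIr.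
have sAC : A \subset 'C_P(H) by rewrite subsetI sAP.
by rewrite -(setIidPr (subsetIl P 'C(H))) -{1}defAB -group_modl // setIC tiCB mulg1.
Qed.

End CoprimeAction.

Section Elements.

Variable gT : finGroupType.
Implicit Types (G P X Y : {group gT}) (u v x y : gT) (p : nat).

Lemma conjg_constt_self pi x : x.`_pi ^ x = x.`_pi.
Proof. by case/cycleP: (cycle_constt pi x) => i ->; rewrite conjXg conjgE mulKg. Qed.

Lemma conjg_cycle_expg_coprime p u v :
  p.-elt u -> u ^ v \in <[u]> -> exists2 k, coprime k p & u ^ v = u ^+ k.
Proof.
move=> pu /cycleP[k def_uv].
have [-> | ntu] := eqVneq u 1; first by exists 1%N; rewrite ?coprime1n ?conj1g.
exists k => //.
have: generator <[u]> (u ^+ k).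
  by rewrite /generator eq_sym eqEcard cycleX -!orderE -def_uv orderJ /=.
have [|_ p_dv_u _] := pgroup_pdiv pu; first by rewrite cycle_eq1.
by rewrite generator_coprime coprime_sym; apply: coprime_dvdr.
Qed.

Lemma mul_cycle_constt_Sylow p G P x y :
    <[x]> * <[y]> = G -> <[x]> :&: <[y]> = 1 ->
    p.-Sylow(G) P -> P <| G -> abelian P ->
  <[x.`_p]> \x <[y.`_p]> = P.
Proof.
move=> defG tiXY sylP nPG abP.
have inP u : <[u]> \subset G -> u.`_p \in P.
  move=> sUG; rewrite (mem_normal_Hall sylP nPG) ?p_elt_constt //.
  by rewrite (subsetP sUG) ?cycle_constt.
have xpP : x.`_p \in P by rewrite inP // -defG mulG_subl.
have ypP : y.`_p \in P by rewrite inP // -defG mulG_subr.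
have tiP : <[x.`_p]> :&: <[y.`_p]> = 1.
  by apply/trivgP; rewrite -tiXY setISS ?cycle_subG ?cycle_constt.
rewrite dprodE ?(sub_abelian_cent2 abP) ?cycle_subG //.
apply/eqP; rewrite eqEcard mulG_subG !cycle_subG xpP ypP /=.
rewrite TI_cardMg // (card_Hall sylP) -defG TI_cardMg //.
by rewrite partnM ?order_gt0 // -!order_constt.
Qed.

Lemma class_conjg_proper G X Y u y :
    abelian X -> X * Y = G -> u \in X -> y \in Y -> u ^ y != u ->
  (u ^ y) ^: X \proper u ^: Y.
Proof.
move=> abX defG Xu Yy nfix_uy; have cuX v : v \in X -> u ^ v = u.
  by move=> Xv; rewrite conjgE (centsP abX u Xu v Xv) mulKg.
rewrite properE; apply/andP; split.
  apply/subsetP=> _ /imsetP[v Xv ->]; rewrite -conjgM.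
  have: y * v \in X * Y.
    by rewrite defG groupM // (subsetP _ _ Yy, subsetP _ _ Xv) // -defG
      ?mulG_subr ?mulG_subl.
  by case/mulsgP=> a b Xa Yb ->; rewrite conjgM cuX // memJ_class.
apply/subsetPn; exists u; first exact: class_refl.
apply: contra nfix_uy => /imsetP[v Xv def_u].
by rewrite -[u ^ y](conjgK v) -def_u cuX ?groupV.
Qed.

Lemma constt_conjg_mem_cycle G P x y p :
    <[x]> * <[y]> = G -> <[x]> :&: <[y]> = 1 ->
    p.-Sylow(G) P -> P <| G -> abelian P ->
    #|<[y]> : <[y]> :&: 'C(P)| <= #|<[x]> : <[x]> :&: 'C(P)| ->
  x.`_p ^ y \in <[x.`_p]>.
Proof.
move=> defG tiXY sylP nPG abP le_iYX.
have defP := mul_cycle_constt_Sylow defG tiXY sylP nPG abP.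
have [_ defPxy _ _] := dprodP defP.
have [sXG sYG] : <[x]> \subset G /\ <[y]> \subset G.
  by apply/andP; rewrite -mulG_subG defG.
have nGP := subsetP (normal_norm nPG).
have sCP : P \subset 'C(P) := abP.
have xpP : x.`_p \in P by rewrite -cycle_subG -defPxy mulG_subl.
set z := x.`_p ^ y.
have Pz : z \in P by rewrite memJ_norm ?nGP ?(subsetP sYG) ?cycle_id.
have [<- | nfix_z] := eqVneq z x.`_p; first exact: cycle_id.
have [g /setIP[Xg cgz] ncPg] : exists2 g, g \in 'C_<[x]>[z] & g \notin 'C(P).
  apply/subsetPn/negP => sCzCP.
  have := proper_card (class_conjg_proper (cycle_abelian x) defG
    (cycle_constt p x) (cycle_id y) nfix_z).
  rewrite -!index_cent1 ltnNge => /negP[].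
  apply: leq_trans (leq_trans le_iYX _); apply/dvdn_leq/indexgS => //.
    by apply/setIS/subsetP=> g /centP cPg; apply/cent1P/cPg.
  by rewrite subsetI subsetIl.
have Xgpi pi : g.`_pi \in <[x]>.
  by rewrite (subsetP _ _ (cycle_constt pi g)) ?cycle_subG.
have gpP : g.`_p \in P.
  by rewrite (mem_normal_Hall sylP nPG) ?p_elt_constt ?(subsetP sXG).
rewrite -(dprod_cyclic_coprime_cent (H := <[g.`_p^']>) (pHall_pgroup sylP)
  abP defP (cycle_cyclic _)).
- rewrite inE Pz /= cent_cycle cent1C.
  by rewrite (subsetP _ _ (cycle_constt _ g)) ?cycle_subG.
- by rewrite /= cycle_subG nGP ?(subsetP sXG).
- exact: pnat_coprime (pHall_pgroup sylP) (p_elt_constt _ g).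
- by rewrite (sub_abelian_cent2 (cycle_abelian x)) ?cycle_subG ?cycle_constt.
apply: contra ncPg; rewrite cycle_subG -{2}(consttC p g) => cPgp'.
by rewrite groupM // (subsetP sCP).
Qed.

End Elements.

Lemma morph_conjg_constt_expg (aT rT : finGroupType) (D : {group aT})
    (f : {morphism D >-> rT}) (x y : aT) (p k : nat) :
  x \in D -> y \in D -> x.`_p ^ y = x.`_p ^+ k -> (f x).`_p ^ f y = (f x).`_p ^+ k.
Proof.
move=> Dx Dy def_xpy.
by rewrite -morph_constt // -morphJ ?groupX // def_xpy morphX ?groupX.
Qed.

Lemma isobicyclic_sym (gT : finGroupType) (G : {group gT}) (x y : gT) (n : nat) :
  isobicyclic G x y n -> isobicyclic G y x n.
Proof.
case=> ox oy defG tiXY [a Aa [ax ay]]; split; rewrite 1?setIC //; last by exists a.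
have /comm_group_setP cXY : group_set (<[x]> * <[y]>) by rewrite defG groupP.
by rewrite -cXY.
Qed.

Theorem proposition7p2 (gT : finGroupType) (G P : {group gT}) (x y : gT) (n p : nat) :
  isobicyclic G x y n -> prime p ->
  (P \in 'Syl_p(G))%g -> (P <| G)%g -> abelian P ->
  exists2 lam : nat, coprime lam p &
    [/\ (x.`_p ^ x = x.`_p)%g, (y.`_p ^ x = y.`_p ^+ lam)%g,
        (x.`_p ^ y = x.`_p ^+ lam)%g & (y.`_p ^ y = y.`_p)%g].
Proof.
move=> isoG _; rewrite inE => sylP nPG abP.
wlog le_iYX : x y isoG / #|<[y]> : <[y]> :&: 'C(P)| <= #|<[x]> : <[x]> :&: 'C(P)|.
  move=> IH; have [le_i | /ltnW le_i] :=
    leqP #|<[y]> : <[y]> :&: 'C(P)| #|<[x]> : <[x]> :&: 'C(P)|; first exact: IH.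
  by have [lam co_lam [? ? ? ?]] := IH y x (isobicyclic_sym isoG) le_i; exists lam.
have [_ _ defG tiXY [a Aa [ax ay]]] := isoG.
have [xG yG] : x \in G /\ y \in G.
  by rewrite -!cycle_subG; apply/andP; rewrite -mulG_subG defG.
have [lam co_lam def_xpy] := conjg_cycle_expg_coprime (p_elt_constt p x)
  (constt_conjg_mem_cycle defG tiXY sylP nPG abP le_iYX).
exists lam => //; rewrite !conjg_constt_self; split=> //.
have := morph_conjg_constt_expg (autm Aa) xG yG def_xpy.
by rewrite /= !autmE ax ay.
Qed.
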